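(* Let $n\geq2$, $H=\{x\in\mathbb{R}^{n+1}:\sum_i x_i=0\}$, $p_H$ the orthogonal projection onto $H$, $V_0=\{0,1\}^{n+1}\setminus\{(0,\dots,0),(1,\dots,1)\}$, $V_{\mathcal{P}}=p_H(V_0)$ (the vertex set of the Voronoi region of $A_n=\mathbb{Z}^{n+1}\cap H$), and let $\tilde G$ be the Cayley graph on $\frac12p_H(\mathbb{Z}^{n+1})$ with generating set $\frac12V_{\mathcal{P}}$. Then the cliques of $\tilde G$ containing $0$ are exactly the sets of the form $\{0,\frac{p_H(u_1)}{2},\dots,\frac{p_H(u_s)}{2}\}$ with $u_1,\dots,u_s$ distinct elements of $V_0$ whose supports $I_i=\{j:(u_i)_j=1\}$ satisfy $I_1\subset I_2\subset\cdots\subset I_s$. In particular, a clique of $\tilde G$ contains at most $n+1$ vertices.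
   Context: In the Cayley graph, $x,y$ are adjacent iff $x-y\in\frac12V_{\mathcal{P}}$. A clique is a set of vertices any two distinct elements of which are adjacent. *)

From HB Require Import structures.
From mathcomp Require Import all_boot all_order all_algebra.
From mathcomp Require Import reals.
Set Implicit Arguments. Unset Strict Implicit. Unset Printing Implicit Defensive.
Import Order.TTheory GRing.Theory Num.Theory.
Local Open Scope ring_scope.

Definition pH (R : realType) (n : nat) (x : 'rV[R]_n.+1) : 'rV[R]_n.+1 :=
  x - ((\sum_i x 0 i) / (n.+1)%:R) *: const_mx 1.

Definition inV0 (R : realType) (n : nat) (u : 'rV[R]_n.+1) : Prop :=
  (forall i, u 0 i = 0 \/ u 0 i = 1) /\ u <> 0 /\ u <> const_mx 1.

Definition supp (R : realType) (n : nat) (u : 'rV[R]_n.+1) : {set 'I_n.+1} :=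
  [set j | u 0 j == 1].

Definition is_vertex (R : realType) (n : nat) (x : 'rV[R]_n.+1) : Prop :=
  exists z : 'rV[int]_n.+1, x = 2^-1 *: pH (map_mx intr z).

Definition adj (R : realType) (n : nat) (x y : 'rV[R]_n.+1) : Prop :=
  exists u, inV0 u /\ x - y = 2^-1 *: pH u.

Definition is_clique (R : realType) (n : nat) (C : 'rV[R]_n.+1 -> Prop) : Prop :=
  (forall x, C x -> is_vertex x) /\
  (forall x y, C x -> C y -> x <> y -> adj x y).

(* Every element of V_0 is the indicator vector 1_S of a nonempty proper subset
   S of {0, ..., n}, and p_H identifies two vectors exactly when they differ by a
   constant vector.  Hence 1/2 p_H(1_T) - 1/2 p_H(1_S) lies in 1/2 V_P iff
   1_T - 1_S - 1_W is constant for some W, which for S, T different from the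
   full set happens exactly when S and T are comparable (take W = T \ S).  So a
   clique through x0 is the set of points x0 + 1/2 p_H(1_S) for S ranging over a
   chain of subsets avoiding the full set and containing the empty set; sorting
   the chain gives the nested supports, and since cardinalities along such a
   chain are distinct and at most n, a clique has at most n + 1 vertices. *)

From HB Require Import structures.
From mathcomp Require Import all_boot all_order all_algebra.
From mathcomp Require Import reals boolp ring lra.
Set Implicit Arguments.
Unset Strict Implicit.
Unset Printing Implicit Defensive.
Import Order.TTheory GRing.Theory Num.Theory.
Local Open Scope ring_scope.

Section Chains.

Variables (T : finType) (D : {set {set T}}).
Hypothesis D_chain : {in D &, forall A B : {set T}, (A \subset B) || (B \subset A)}.

Lemma chain_card_inj : {in D &, injective (fun A : {set T} => #|A|)}.
Proof.
move=> A B AD BD eqAB; case/orP: (D_chain AD BD) => sub; apply/eqP.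
  by rewrite eqEcard sub eqAB /=.
by rewrite eq_sym eqEcard sub eqAB /=.
Qed.

Lemma chain_card : setT \notin D -> (#|D| <= #|T|)%N.
Proof.
move=> DnT; rewrite cardE -(size_map (fun A : {set T} => #|A|)) -(size_iota 0 #|T|).
apply: uniq_leq_size.
  by rewrite map_inj_in_uniq ?enum_uniq // => A B; rewrite !mem_enum; apply: chain_card_inj.
move=> k /mapP [A]; rewrite mem_enum => AD ->; rewrite mem_iota add0n /=.
by rewrite -cardsT proper_card // properT; apply: contraNneq DnT => <-.
Qed.

Lemma chain_sorted_enum : exists s : seq {set T},
  [/\ uniq s, s =i D &
      forall i j, (i <= j < size s)%N -> nth set0 s i \subset nth set0 s j].
Proof.
pose leS := fun A B : {set T} => A \subset B.
exists (sort leS (enum D)); split.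
- by rewrite sort_uniq enum_uniq.
- by move=> A; rewrite mem_sort mem_enum.
move=> i j /andP [ij jlt].
have sorted_s : sorted leS (sort leS (enum D)).
  apply: (@sort_sorted_in _ (mem D)); last by apply/allP => A; rewrite mem_enum.
  by move=> A B AD BD; apply: D_chain.
have leS_trans : transitive leS by move=> B A C; apply: subset_trans.
have leS_refl : reflexive leS by move=> A; apply: subxx.
by apply: (sorted_leq_nth leS_trans leS_refl) => //; rewrite inE (leq_ltn_trans ij).
Qed.

End Chains.

Section CayleyGraph.

Variables (R : realType) (n : nat).
Local Notation vec := 'rV[R]_n.+1.
Implicit Types (x y z u : vec) (S T W : {set 'I_n.+1}).

Lemma pHB x y : pH (x - y) = pH x - pH y.
Proof.
have sumB : \sum_i (x - y) 0 i = \sum_i x 0 i - \sum_i y 0 i.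
  by rewrite -sumrB; apply: eq_bigr => i _; rewrite !mxE.
by apply/matrixP => i j; rewrite /pH sumB !mxE; ring.
Qed.

Lemma pH0 : pH (0 : vec) = 0.
Proof. by have := pHB 0 0; rewrite !subrr. Qed.

Lemma pH_const (c : R) : pH (const_mx c : vec) = 0.
Proof.
rewrite /pH; under eq_bigr do rewrite mxE.
rewrite sumr_const card_ord -[c *+ _]mulr_natr mulfK ?pnatr_eq0 //.
by apply/matrixP => i j; rewrite !mxE mulr1 subrr.
Qed.

Lemma pH_eq0_const x : pH x = 0 -> forall i j, x 0 i = x 0 j.
Proof.
move/matrixP => x_const i j; have := x_const 0 i; have := x_const 0 j.
by rewrite !mxE; set a := _ / _; lra.
Qed.

Definition ind S : vec := \row_j (j \in S)%:R.

Lemma supp_ind S : supp (ind S) = S.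
Proof.
apply/setP => j; rewrite inE mxE.
by case: (j \in S); rewrite ?eqxx // eq_sym oner_eq0.
Qed.

Lemma ind_inj : injective ind.
Proof. exact: can_inj supp_ind. Qed.

Lemma ind0 : ind set0 = 0.
Proof. by apply/matrixP => i j; rewrite !mxE in_set0. Qed.

Lemma indT : ind setT = const_mx 1.
Proof. by apply/matrixP => i j; rewrite !mxE in_setT. Qed.

Lemma ind_supp u : inV0 u -> ind (supp u) = u.
Proof.
case=> u01 _; apply/matrixP => i j; rewrite (ord1 i) !mxE inE.
by case: (u01 j) => ->; rewrite ?eqxx // eq_sym oner_eq0.
Qed.

Lemma inV0_ind S : inV0 (ind S) <-> S != set0 /\ S != setT.
Proof.
split=> [[_ [ind_neq0 ind_neqT]]|[S_neq0 S_neqT]].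
  by split; apply/eqP => S_eq; [apply: ind_neq0 | apply: ind_neqT]; rewrite S_eq ?ind0 ?indT.
split; [|split].
- by move=> j; rewrite mxE; case: (j \in S); [right|left].
- by rewrite -ind0 => /ind_inj /eqP; apply/negP.
- by rewrite -indT => /ind_inj /eqP; apply/negP.
Qed.

Lemma inV0_supp u : inV0 u -> supp u != set0 /\ supp u != setT.
Proof. by move=> u_V0; apply/inV0_ind; rewrite ind_supp. Qed.

Lemma pH_ind_inj S T : S != setT -> T != setT -> pH (ind S) = pH (ind T) -> S = T.
Proof.
move=> S_neqT T_neqT /eqP; rewrite -subr_eq0 -pHB => /eqP /pH_eq0_const diff_const.
apply/setP => j; case Sj: (j \in S); case Tj: (j \in T) => //.
- case/eqP: S_neqT; apply/setP => k; rewrite inE.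
  by have := diff_const k j; rewrite !mxE Sj Tj; case: (k \in S); case: (k \in T) => //=; lra.
- case/eqP: T_neqT; apply/setP => k; rewrite inE.
  by have := diff_const k j; rewrite !mxE Sj Tj; case: (k \in S); case: (k \in T) => //=; lra.
Qed.

Lemma pH_ind_comparable S T W :
  pH (ind S) - pH (ind T) = pH (ind W) -> (S \subset T) || (T \subset S).
Proof.
move=> /eqP; rewrite -subr_eq0 -!pHB => /eqP /pH_eq0_const diff_const.
(* For i in S :\: T and j in T :\: S, coordinate i of the constant vector
   ind S - ind T - ind W is >= 0 and coordinate j is <= -1. *)
case: (boolP (S \subset T)) => //= /subsetPn [i Si Tni].
apply/subsetP => j Tj; apply/negPn/negP => Snj.
have := diff_const i j; rewrite !mxE (negbTE Tni) (negbTE Snj) Si Tj.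
by case: (i \in W); case: (j \in W) => /=; lra.
Qed.

Lemma ind_setD S T : S \subset T -> ind T - ind S = ind (T :\: S).
Proof.
move=> /subsetP ST; apply/matrixP => i j; rewrite !mxE inE.
case Tj: (j \in T); case Sj: (j \in S) => /=; rewrite ?subrr ?subr0 //.
by rewrite (ST j Sj) in Tj.
Qed.

Lemma half_neq0 : (2^-1 : R) != 0.
Proof. by rewrite invr_eq0 pnatr_eq0. Qed.

Lemma set0_neqT : set0 != [set: 'I_n.+1].
Proof. by apply/eqP => /setP /(_ ord0); rewrite !inE. Qed.

Definition half_vertex S : vec := 2^-1 *: pH (ind S).

Lemma half_vertex0 : half_vertex set0 = 0.
Proof. by rewrite /half_vertex ind0 pH0 scaler0. Qed.

Lemma is_vertex_half_vertex S : is_vertex (half_vertex S).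
Proof.
exists (\row_j ((j \in S) : nat)%:Z); congr (_ *: pH _).
by apply/matrixP => i j; rewrite !mxE pmulrn.
Qed.

Lemma half_vertex_inj S T :
  S != setT -> T != setT -> half_vertex S = half_vertex T -> S = T.
Proof.
by move=> S_neqT T_neqT /(scalerI half_neq0); apply: pH_ind_inj.
Qed.

Lemma adjDl x y z : adj (x + y) (x + z) <-> adj y z.
Proof. by rewrite /adj [x + y]addrC addrKA. Qed.

Lemma adj_sym x y : adj x y -> adj y x.
Proof.
case=> u [[u01 [u_neq0 u_neqT]] xy_eq]; exists (const_mx 1 - u); split; [split; [|split]|].
- by move=> i; rewrite !mxE; case: (u01 i) => ->; [right|left]; rewrite ?subr0 ?subrr.
- by move/eqP; rewrite subr_eq0 => /eqP /esym.
- by move/eqP; rewrite -subr_eq0 addrAC subrr add0r oppr_eq0 => /eqP.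
- by rewrite pHB pH_const sub0r scalerN -xy_eq opprB.
Qed.

Lemma adj_half_vertex_comparable S T :
  adj (half_vertex S) (half_vertex T) -> (S \subset T) || (T \subset S).
Proof.
case=> u [u_V0]; rewrite -scalerBr -(ind_supp u_V0) => /(scalerI half_neq0).
exact: pH_ind_comparable.
Qed.

Lemma adj_half_vertex S T :
  S \proper T -> T != setT -> adj (half_vertex T) (half_vertex S).
Proof.
case/andP=> ST TnS T_neqT; exists (ind (T :\: S)); split.
  apply/inV0_ind; split; first by rewrite setD_eq0.
  by apply: contraNneq T_neqT => TS_eqT; rewrite eqEsubset subsetT -TS_eqT subsetDl.
by rewrite -scalerBr -pHB ind_setD.
Qed.

Lemma chain_clique (D : {set {set 'I_n.+1}}) (C : vec -> Prop) :
  {in D &, forall S T, (S \subset T) || (T \subset S)} -> setT \notin D ->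
  (forall x, C x <-> exists2 S, S \in D & x = half_vertex S) ->
  is_clique C.
Proof.
move=> D_chain DnT C_D; split=> [x /C_D [S _ ->]|]; first exact: is_vertex_half_vertex.
move=> x y /C_D [S SD ->] /C_D [T TD ->] xy_neq.
have S_neqT : S != T by apply: contra_not_neq xy_neq => ->.
have neqT A : A \in D -> A != setT by apply: contraTneq => ->.
case/orP: (D_chain S T SD TD) => sub.
  by apply: adj_sym; apply: adj_half_vertex (neqT T TD); rewrite properEneq S_neqT.
by apply: adj_half_vertex (neqT S SD); rewrite properEneq eq_sym S_neqT.
Qed.

Section CliqueSupports.

Variables (C : vec -> Prop) (x0 : vec).

Definition clique_supports : {set {set 'I_n.+1}} :=
  [set S | (S != setT) && `[< C (x0 + half_vertex S) >]].

Lemma clique_supportsP S :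
  reflect (S != setT /\ C (x0 + half_vertex S)) (S \in clique_supports).
Proof. by rewrite inE; apply: (iffP andP) => -[-> /asboolP]. Qed.

Lemma setT_notin_clique_supports : setT \notin clique_supports.
Proof. by apply/clique_supportsP => -[/eqP]. Qed.

Hypotheses (C_clique : is_clique C) (C_x0 : C x0).

Lemma set0_in_clique_supports : set0 \in clique_supports.
Proof.
by apply/clique_supportsP; rewrite half_vertex0 addr0 set0_neqT.
Qed.

Lemma clique_supports_cover y :
  C y <-> exists2 S, S \in clique_supports & y = x0 + half_vertex S.
Proof.
split=> [C_y|[S /clique_supportsP [_ C_S] ->] //].
have [->|y_neq] := eqVneq y x0.
  by exists set0; rewrite ?set0_in_clique_supports ?half_vertex0 ?addr0.
have [u [u_V0 y_eq]] := C_clique.2 y x0 C_y C_x0 (elimN eqP y_neq).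
have y_def : y = x0 + half_vertex (supp u).
  by rewrite /half_vertex (ind_supp u_V0) -y_eq addrC subrK.
by exists (supp u) => //; apply/clique_supportsP; rewrite -y_def; case: (inV0_supp u_V0).
Qed.

Lemma clique_supports_chain :
  {in clique_supports &, forall S T, (S \subset T) || (T \subset S)}.
Proof.
move=> S T /clique_supportsP [S_neqT C_S] /clique_supportsP [T_neqT C_T].
have [->|ST_neq] := eqVneq S T; first by rewrite subxx.
apply/adj_half_vertex_comparable/(adjDl x0)/(C_clique.2 _ _ C_S C_T).
by move/addrI/(half_vertex_inj S_neqT T_neqT)/eqP; apply/negP.
Qed.

End CliqueSupports.

Lemma clique_card (C : vec -> Prop) :
  is_clique C -> exists l : seq vec, (size l <= n.+1)%N /\ forall x, C x -> x \in l.
Proof.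
move=> C_clique; have [[x0 C_x0]|C_empty] := pselect (exists x0, C x0); last first.
  by exists [::]; split=> // x C_x; case: C_empty; exists x.
exists [seq x0 + half_vertex A | A <- enum (clique_supports C x0)]; split.
  rewrite size_map -cardE -[X in (_ <= X)%N]card_ord.
  exact: chain_card (clique_supports_chain (x0 := x0) C_clique) (setT_notin_clique_supports C x0).
move=> x /(clique_supports_cover C_clique C_x0) [S SD ->].
by apply: map_f; rewrite mem_enum.
Qed.

Definition nested_support_repr (C : vec -> Prop) s (u : 'I_s -> vec) : Prop :=
  injective u /\
  (forall i, inV0 (u i)) /\
  (forall i j : 'I_s, (i <= j)%N -> supp (u i) \subset supp (u j)) /\
  (forall x, C x <-> (x = 0 \/ exists i, x = 2^-1 *: pH (u i))).

Lemma clique0_nested_support_repr (C : vec -> Prop) :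
  is_clique C -> C 0 -> exists s (u : 'I_s -> vec), nested_support_repr C u.
Proof.
move=> C_clique C_0; set D := clique_supports C 0.
have D'_chain : {in D :\ set0 &, forall S T, (S \subset T) || (T \subset S)}.
  move=> S T /setD1P [_ SD] /setD1P [_ TD]; exact: (clique_supports_chain C_clique SD TD).
have [s [s_uniq s_D' s_sorted]] := chain_sorted_enum D'_chain.
have s_in (i : 'I_(size s)) : nth set0 s i \in D :\ set0 by rewrite -s_D' mem_nth.
exists (size s), (fun i => ind (nth set0 s i)); split; [|split; [|split]].
- by move=> i j /ind_inj /eqP; rewrite nth_uniq // => /eqP /val_inj.
- move=> i; have /setD1P [S_neq0 /clique_supportsP [S_neqT _]] := s_in i.
  exact/inV0_ind.
- by move=> i j ij; rewrite !supp_ind; apply: s_sorted; rewrite ij /=.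
move=> x; rewrite (clique_supports_cover C_clique C_0).
split=> [[S SD ->]|[->|[i ->]]]; rewrite ?add0r.
- have [->|S_neq0] := eqVneq S set0; first by left; rewrite half_vertex0.
  have S_idx : (index S s < size s)%N by rewrite index_mem s_D' in_setD1 S_neq0.
  by right; exists (Ordinal S_idx); rewrite /= nth_index // -index_mem.
- by exists set0; rewrite ?set0_in_clique_supports ?half_vertex0 ?add0r.
- by exists (nth set0 s i); [case/setD1P: (s_in i) | rewrite add0r].
Qed.

Lemma nested_support_repr_clique (C : vec -> Prop) s (u : 'I_s -> vec) :
  nested_support_repr C u -> is_clique C /\ C 0.
Proof.
case=> _ [u_V0 [u_mono C_u]]; split; last by apply/C_u; left.
pose D := set0 |: [set supp (u i) | i : 'I_s].
apply: (@chain_clique D).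
- move=> S T /setU1P [->|/imsetP [i _ ->]]; rewrite ?sub0set //.
  case/setU1P => [->|/imsetP [j _ ->]]; rewrite ?sub0set ?orbT //.
  by case: (leqP i j) => [/u_mono ->|/ltnW /u_mono ->]; rewrite ?orbT.
- rewrite !inE negb_or eq_sym set0_neqT /=.
  apply/negP => /imsetP [i _ supp_eqT].
  by have [_] := inV0_supp (u_V0 i); rewrite -supp_eqT eqxx.
move=> x; rewrite C_u; split=> [[->|[i ->]]|[S /setU1P [->|/imsetP [i _ ->]] ->]].
- by exists set0; rewrite ?setU11 ?half_vertex0.
- by exists (supp (u i)); rewrite /half_vertex ?ind_supp // setU1r // imset_f.
- by left; rewrite half_vertex0.
- by right; exists i; rewrite /half_vertex ind_supp.
Qed.

End CayleyGraph.

Theorem lemma11 (R : realType) (n : nat) (hn : (2 <= n)%N) :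
  (forall C : 'rV[R]_n.+1 -> Prop,
     (is_clique C /\ C 0) <->
     exists (s : nat) (u : 'I_s -> 'rV[R]_n.+1),
       injective u /\
       (forall i, inV0 (u i)) /\
       (forall i j : 'I_s, (i <= j)%N -> supp (u i) \subset supp (u j)) /\
       (forall x, C x <-> (x = 0 \/ exists i, x = 2^-1 *: pH (u i)))) /\
  (forall C : 'rV[R]_n.+1 -> Prop, is_clique C ->
     exists l : seq 'rV[R]_n.+1, (size l <= n.+1)%N /\ (forall x, C x -> x \in l)).
Proof.
split=> [C|]; last exact: clique_card.
split=> [[C_clique C_0]|[s [u u_repr]]].
  exact: clique0_nested_support_repr.
exact: nested_support_repr_clique u_repr.
Qed.
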